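(* If a discrete Hecke pair $(G,H)$ has property (RD), then it is relatively unimodular, i.e. $L(g)=R(g)$ for all $g\in G$.
   Context: A discrete Hecke pair is a group $G$ with a subgroup $H$ such that $L(x):=[H:H\cap xHx^{-1}]<\infty$ for all $x\in G$; set $R(x):=L(x^{-1})$. The relative modular function is $\Delta_{(G,H)}(g)=L(g)/R(g)$, and $(G,H)$ is relatively unimodular if $\Delta_{(G,H)}\equiv1$. The Hecke algebra $\mathcal H(G,H)$ consists of finitely supported right $H$-invariant functions on $H\backslash G$ with product $f*g(Hx)=\sum_{Hy\in H\backslash G}f(Hxy^{-1})g(Hy)$, and $\lambda(f)\xi=f*\xi$ on $\ell^2(H\backslash G)$. A length function on $(G,H)$ is $l:G\to[0,\infty)$ with $l(e)=0$, $l(g)=l(g^{-1})$, $l(gh)\le l(g)+l(h)$ and $l|_H=0$. $(G,H)$ has property (RD) if there exist such $l$ and $s,c>0$ with $\|\lambda(f)\|\le c\big(\sum_{Hx\in H\backslash G}|f(Hx)|^2(1+l(x))^{2s}\big)^{1/2}$ for all $f\in\mathcal H(G,H)$. *)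

From HB Require Import structures.
From Stdlib Require Import ClassicalEpsilon.
From mathcomp Require Import all_boot all_order all_algebra.
From mathcomp Require Import monoid.
From mathcomp Require Import all_classical all_reals.
From mathcomp Require Import topology normedtype sequences esum exp.
From mathcomp Require Import complex.

Set Implicit Arguments.
Unset Strict Implicit.
Unset Printing Implicit Defensive.

Import Order.TTheory GRing.Theory Num.Theory.
Local Open Scope classical_set_scope.
Local Open Scope ring_scope.

Section Hecke.
Variable (G : groupType).
Implicit Types (H K : set G) (x y : G).

Definition is_subgroup H : Prop :=
  [/\ H 1%g, (forall x y, H x -> H y -> H (x * y)%g) & (forall x, H x -> H (x^-1)%g)].

Definition conj_int H x : set G := [set h | H h /\ H (x^-1 * h * x)%g].

(* index_is H K n : K ⊆ H and [H : K] = n, i.e. there are exactly n left cosets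
   hK (h ∈ H) of K in H, witnessed by a list of n pairwise inequivalent
   representatives covering H. *)
Definition index_is H K (n : nat) : Prop :=
  exists s : seq G, [/\ size s = n,
    (forall i, (i < n)%N -> H (nth 1%g s i)),
    (forall i j, (i < n)%N -> (j < n)%N ->
        K ((nth 1%g s i)^-1 * nth 1%g s j)%g -> i = j) &
    (forall h, H h -> exists2 i, (i < n)%N & K ((nth 1%g s i)^-1 * h)%g)].

Definition L_is H x (n : nat) : Prop := index_is H (conj_int H x) n.
Definition R_is H x (n : nat) : Prop := L_is H (x^-1)%g n.

Definition hecke_pair H : Prop :=
  is_subgroup H /\ forall x, exists n, L_is H x n.

Definition rel_unimodular H : Prop :=
  forall g n m, L_is H g n -> R_is H g m -> n = m.

(* a chosen representative of the right coset Hx, and the set of chosen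
   representatives, which indexes H\G bijectively *)
Definition coset_rep H x : G := epsilon (inhabits 1%g) (fun y => H (y * x^-1)%g).
Definition reps H : set G := [set y | exists x, y = coset_rep H x].

Variable R : realType.
Local Notation C := (R[i]).

Definition cabs2 (z : C) : R := (complex.Re z) ^+ 2 + (complex.Im z) ^+ 2.

(* functions on H\G : left H-invariant functions on G *)
Definition left_inv H (f : G -> C) : Prop := forall h x, H h -> f (h * x)%g = f x.

(* elements of the Hecke algebra: finitely supported functions on H\G
   which are right H-invariant *)
Definition hecke_elt H (f : G -> C) : Prop :=
  [/\ left_inv H f, (forall h x, H h -> f (x * h)%g = f x) &
      finite_set [set y | reps H y /\ f y != 0]].

Definition l2norm2 H (xi : G -> C) : \bar R :=
  (\esum_(y in reps H) ((cabs2 (xi y))%:E))%E.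

Definition in_l2 H (xi : G -> C) : Prop :=
  left_inv H xi /\ (l2norm2 H xi < +oo)%E.

(* convolution (f * xi)(Hx) = sum_{Hy in H\G} f(H x y^{-1}) xi(Hy);
   for a Hecke pair and f in the Hecke algebra this sum has finite support *)
Definition conv H (f xi : G -> C) : G -> C :=
  fun x => \sum_(y \in reps H) (f (x * y^-1)%g * xi y).

Definition lambda_norm_le H (f : G -> C) (K : R) : Prop :=
  forall xi, in_l2 H xi ->
    (l2norm2 H (conv H f xi) <= (K ^+ 2)%:E * l2norm2 H xi)%E.

Definition length_fn H (l : G -> R) : Prop :=
  [/\ forall x, 0 <= l x, l 1%g = 0, (forall x, l x = l (x^-1)%g),
      (forall x y, l (x * y)%g <= l x + l y) & (forall h, H h -> l h = 0)].

Definition weighted_norm2 H (l : G -> R) (s : R) (f : G -> C) : R :=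
  \sum_(x \in reps H) (cabs2 (f x) * (1 + l x) `^ (2 * s)).

Definition property_RD H : Prop :=
  exists l : G -> R, length_fn H l /\
  exists s c : R, [/\ 0 < s, 0 < c &
    forall f, hecke_elt H f ->
      lambda_norm_le H f (c * Num.sqrt (weighted_norm2 H l s f))].

End Hecke.

From Stdlib Require Import ClassicalEpsilon.
From mathcomp Require Import all_boot all_order all_algebra monoid.
From mathcomp Require Import all_classical all_reals.
From mathcomp Require Import esum exp numfun complex.
From mathcomp Require Import zify ring lra.

Set Implicit Arguments.
Unset Strict Implicit.
Unset Printing Implicit Defensive.

(* Write a = L(g) and b = R(g). Comparing indices along the chain of subgroups
   H, g^n H g^-n, g^(n+1) H g^-(n+1) gives L(g^n) b^n = R(g^n) a^n.
   Testing (RD) on the indicator of H g^n H shows that L(g^n) / R(g^n) is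
   bounded by a polynomial in 1 + l(g^n) <= (n + 1) (1 + l(g)).  So (a/b)^n
   grows at most polynomially, forcing a <= b; applied to g^-1 this gives
   a = b. *)

Ltac group_simpl :=
  rewrite ?invgM ?invgK -?mulgA ?(mulKg, mulVKg, mulgV, mulVg, mulg1, mul1g).

Local Open Scope classical_set_scope.

Section Subgroups.
Variable G : groupType.
Implicit Types (A B : set G) (x y : G).
Local Open Scope group_scope.

Lemma subgroup1 A : is_subgroup A -> A 1.
Proof. by case. Qed.

Lemma subgroupM A x y : is_subgroup A -> A x -> A y -> A (x * y).
Proof. by case=> _ + _; apply. Qed.

Lemma subgroupV A x : is_subgroup A -> A x -> A x^-1.
Proof. by case=> _ _; apply. Qed.

Lemma subgroupVE A x : is_subgroup A -> A x^-1 = A x.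
Proof.
move=> sA; rewrite propeqE; split; last exact: subgroupV.
by rewrite -{2}(invgK x); apply: subgroupV.
Qed.

Lemma subgroupI A B : is_subgroup A -> is_subgroup B -> is_subgroup (A `&` B).
Proof.
move=> sA sB; split; first by split; apply: subgroup1.
- by move=> x y [? ?] [? ?]; split; apply: subgroupM.
- by move=> x [? ?]; split; apply: subgroupV.
Qed.

Definition conjset x A : set G := [set y | A (x^-1 * y * x)].

Lemma subgroup_conjset A x : is_subgroup A -> is_subgroup (conjset x A).
Proof.
move=> sA; split; rewrite /conjset /=.
- by rewrite mulg1 mulVg; apply: subgroup1.
- move=> y z Ay Az; have := subgroupM sA Ay Az.
  by rewrite -!mulgA (mulgA x) mulgV mul1g.
- move=> y Ay; have := subgroupV sA Ay.
  by rewrite !invgM invgK !mulgA.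
Qed.

Lemma conjsetM x y A : conjset x (conjset y A) = conjset (x * y) A.
Proof. by apply: funext => z; rewrite /conjset /= invgM !mulgA. Qed.

Lemma conjsetI x A B : conjset x (A `&` B) = conjset x A `&` conjset x B.
Proof. by []. Qed.

Lemma conjset1 A : conjset 1 A = A.
Proof. by apply: funext => z; rewrite /conjset /= invg1 mul1g mulg1. Qed.

End Subgroups.

Section Index.
Variable G : groupType.
Implicit Types (A B C D E K U Y Z : set G) (x : G).
Local Open Scope group_scope.

Definition distinct_cosets A K n (f : nat -> G) : Prop :=
  (forall i, (i < n)%N -> A (f i)) /\
  (forall i j, (i < n)%N -> (j < n)%N -> K ((f i)^-1 * f j) -> i = j).

Definition has_index A K n : Prop :=
  exists f, distinct_cosets A K n f /\
    forall h, A h -> exists2 i, (i < n)%N & K ((f i)^-1 * h).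

Lemma index_is_has_index A K n : index_is A K n -> has_index A K n.
Proof. by case=> s [_ sA sd sc]; exists (nth 1 s). Qed.

Lemma distinct_cosets_leq A K n f m g : is_subgroup K -> distinct_cosets A K n f ->
  (forall h, A h -> exists2 i, (i < m)%N & K ((g i)^-1 * h)) -> (n <= m)%N.
Proof.
move=> sK [fA fd] gc.
have pick (i : 'I_n) : {j : 'I_m | K ((g j)^-1 * f i)}.
  apply: cid; have [j jm gj] := gc _ (fA _ (ltn_ord i)).
  by exists (Ordinal jm).
have pick_inj : injective (fun i => sval (pick i)).
  move=> i1 i2 e; apply: val_inj; apply: fd; rewrite ?ltn_ord //.
  have k1 := svalP (pick i1); have k2 := svalP (pick i2).
  rewrite e in k1; have := subgroupM sK (subgroupV sK k1) k2.
  by rewrite invgM invgK mulgA mulgK.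
by have := leq_card _ pick_inj; rewrite !card_ord.
Qed.

Lemma has_index_uniq A K n m : is_subgroup K -> has_index A K n -> has_index A K m -> n = m.
Proof.
move=> sK [f [df cf]] [g [dg cg]]; apply/eqP; rewrite eqn_leq.
by rewrite (distinct_cosets_leq sK df cg) (distinct_cosets_leq sK dg cf).
Qed.

Lemma has_index_gt0 A K n : A 1 -> has_index A K n -> (0 < n)%N.
Proof. by move=> A1 [f [_ cf]]; have [i + _] := cf _ A1; apply: leq_ltn_trans. Qed.

(* A maximal family of distinct cosets covers [A]. *)
Lemma has_index_of_bounded A K M : is_subgroup K ->
  (forall n f, distinct_cosets A K n f -> (n <= M)%N) -> exists n, has_index A K n.
Proof.
move=> sK bnd.
pose P n := `[< exists f, distinct_cosets A K n f >].
have P0 : exists n, P n by exists 0%N; apply/asboolP; exists (fun=> 1).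
have PM n : P n -> (n <= M)%N by move=> /asboolP [f /bnd].
case: (ex_maxnP P0 PM) => n /asboolP [f df] nmax.
exists n, f; split=> // h Ah; apply: contrapT => nc.
pose f' i := if i == n then h else f i.
have : (n.+1 <= n)%N; last by rewrite ltnn.
apply: nmax; apply/asboolP; exists f'; split.
- move=> i ?; rewrite /f'; case: (eqVneq i n) => [_|ni]; first exact: Ah.
  by apply: df.1; rewrite ltn_neqAle ni -ltnS.
- move=> i j ? ?; rewrite /f'.
  case: (eqVneq i n) => [->|ni]; case: (eqVneq j n) => [->|nj] hK //.
  + exfalso; apply: nc; exists j; first by rewrite ltn_neqAle nj -ltnS.
    by rewrite -(invgK (_ * h)) subgroupVE // invgM invgK.
  + by exfalso; apply: nc; exists i; first by rewrite ltn_neqAle ni -ltnS.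
  + by apply: df.2 => //; rewrite ltn_neqAle ?ni ?nj -ltnS.
Qed.

Lemma has_index_setI U Y Z m : is_subgroup U -> is_subgroup Y -> is_subgroup Z ->
  U `<=` Y -> has_index Y (Y `&` Z) m -> exists n, has_index U (U `&` Z) n.
Proof.
move=> sU sY sZ UY [g [_ cg]]; apply: (@has_index_of_bounded _ _ m); first exact: subgroupI.
move=> n f [fU fd]; apply: (distinct_cosets_leq (f := f) (subgroupI sY sZ) _ cg).
split=> [i ?|i j hi hj [_ ?]]; first by apply/UY/fU.
apply: fd => //; split => //.
exact: subgroupM sU (subgroupV sU (fU _ hi)) (fU _ hj).
Qed.

Lemma has_index_tower A E D a b : is_subgroup A -> is_subgroup E -> is_subgroup D ->
  E `<=` A -> D `<=` E -> has_index A E a -> has_index E D b -> has_index A D (a * b)%N.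
Proof.
move=> sA sE sD EA DE [f [[fA fd] fc]] [g [[gE gd] gc]].
have b0 : (0 < b)%N by apply: (has_index_gt0 (K := D) (subgroup1 sE)); exists g.
exists (fun k => f (k %/ b)%N * g (k %% b)%N); split; first split.
- move=> k hk; apply: subgroupM => //; first by apply: fA; rewrite ltn_divLR.
  by apply/EA/gE; rewrite ltn_mod.
- move=> k k' hk hk' hK.
  have hq : (k %/ b)%N = (k' %/ b)%N.
    apply: fd; rewrite ?ltn_divLR //.
    have g1 : E (g (k %% b)%N) by apply: gE; rewrite ltn_mod.
    have g2 : E (g (k' %% b)%N) by apply: gE; rewrite ltn_mod.
    have := subgroupM sE (subgroupM sE g1 (DE _ hK)) (subgroupV sE g2).
    by rewrite invgM !mulgA mulgV mul1g mulgK.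
  have hr : (k %% b)%N = (k' %% b)%N.
    apply: gd; rewrite ?ltn_mod //.
    by move: hK; rewrite hq invgM !mulgA mulgVK.
  by rewrite (divn_eq k b) (divn_eq k' b) hq hr.
- move=> h Ah; have [i hi hE] := fc _ Ah; have [j hj hD] := gc _ hE.
  exists (i * b + j)%N.
    by rewrite -ltn_divLR // divnMDl // divn_small // addn0.
  by rewrite divnMDl // divn_small // addn0 modnMDl modn_small // invgM -mulgA.
Qed.

Lemma has_index_conj A K n x : has_index A K n -> has_index (conjset x A) (conjset x K) n.
Proof.
case=> f [[fA fd] fc]; exists (fun i => x * f i * x^-1); split; first split.
- by move=> i hi; rewrite /conjset /=; group_simpl; apply: fA.
- by move=> i j hi hj; rewrite /conjset /= => hK; apply: fd => //; move: hK; group_simpl.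
- move=> h; rewrite /conjset /= => /fc [i hi hK].
  by exists i => //; group_simpl; move: hK; group_simpl.
Qed.

(* Each side is [A : A ∩ B ∩ C] [B : A ∩ B ∩ C] [C : A ∩ B ∩ C] divided by the
   same product of indices of A ∩ B ∩ C in the pairwise intersections. *)
Lemma has_index_cocycle A B C p1 q1 p2 q2 p3 q3 :
  is_subgroup A -> is_subgroup B -> is_subgroup C ->
  has_index A (A `&` B) p1 -> has_index B (A `&` B) q1 ->
  has_index B (B `&` C) p2 -> has_index C (B `&` C) q2 ->
  has_index C (C `&` A) p3 -> has_index A (C `&` A) q3 ->
  (p1 * p2 * p3 = q1 * q2 * q3)%N.
Proof.
move=> sA sB sC h1 k1 h2 k2 h3 k3.
pose D := A `&` B `&` C.
have sAB := subgroupI sA sB; have sBC := subgroupI sB sC; have sCA := subgroupI sC sA.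
have sD : is_subgroup D by apply: subgroupI.
have [r1 i1] := has_index_setI sAB sB sC (fun x => @proj2 _ _) h2.
have [r2 i2] := has_index_setI sBC sC sA (fun x => @proj2 _ _) h3.
have [r3 i3] := has_index_setI sCA sA sB (fun x => @proj2 _ _) h1.
have eD2 : B `&` C `&` A = D by apply: funext => z; rewrite propeqE /D /=; tauto.
have eD3 : C `&` A `&` B = D by apply: funext => z; rewrite propeqE /D /=; tauto.
rewrite eD2 in i2; rewrite eD3 in i3.
have DAB : D `<=` A `&` B by move=> z [].
have DBC : D `<=` B `&` C by move=> z [[? ?] ?].
have DCA : D `<=` C `&` A by move=> z [[? ?] ?].
have eA := has_index_uniq sD (has_index_tower sA sAB sD (fun x => @proj1 _ _) DAB h1 i1)
  (has_index_tower sA sCA sD (fun x => @proj2 _ _) DCA k3 i3).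
have eB := has_index_uniq sD (has_index_tower sB sAB sD (fun x => @proj2 _ _) DAB k1 i1)
  (has_index_tower sB sBC sD (fun x => @proj1 _ _) DBC h2 i2).
have eC := has_index_uniq sD (has_index_tower sC sBC sD (fun x => @proj2 _ _) DBC k2 i2)
  (has_index_tower sC sCA sD (fun x => @proj1 _ _) DCA h3 i3).
have r_gt0 : (0 < r1 * r2 * r3)%N.
  by rewrite !muln_gt0 (has_index_gt0 (subgroup1 sAB) i1)
    (has_index_gt0 (subgroup1 sBC) i2) (has_index_gt0 (subgroup1 sCA) i3).
apply/eqP; rewrite -(eqn_pmul2r r_gt0); apply/eqP.
have -> : (p1 * p2 * p3 * (r1 * r2 * r3) = (p1 * r1) * (p2 * r2) * (p3 * r3))%N by ring.
have -> : (q1 * q2 * q3 * (r1 * r2 * r3) = (q1 * r1) * (q2 * r2) * (q3 * r3))%N by ring.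
by rewrite eA eB eC; ring.
Qed.

End Index.

Section HeckeIndex.
Variables (G : groupType) (H : set G).
Local Open Scope group_scope.

Lemma L_has_index x m : L_is H x m -> has_index H (H `&` conjset x H) m.
Proof. exact: index_is_has_index. Qed.

Lemma R_has_index x m : is_subgroup H -> R_is H x m ->
  has_index (conjset x H) (conjset x H `&` H) m.
Proof.
move=> sH /index_is_has_index /(has_index_conj x).
have -> // : conjset x (conj_int H x^-1) = conjset x H `&` H.
by apply: funext => z; rewrite /conjset /conj_int /setI /=; group_simpl.
Qed.

Lemma L_R_expg g a b n u v : hecke_pair H -> L_is H g a -> R_is H g b ->
  L_is H (g ^+ n) u -> R_is H (g ^+ n) v -> (u * b ^ n = v * a ^ n)%N.
Proof.
move=> [sH Lfin] ha hb.
pose Hn n := conjset (g ^+ n) H.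
have sHn k : is_subgroup (Hn k) by apply: subgroup_conjset.
elim: n u v => [|n IH] u' v' hu' hv'.
  move: (L_has_index hu') (R_has_index sH hv'); rewrite expg0 conjset1 => i1 i2.
  by rewrite !expn0 !muln1; apply: has_index_uniq (subgroupI sH sH) i1 i2.
have [u hu] := Lfin (g ^+ n); have [v hv] := Lfin (g ^+ n)^-1.
have k1 : has_index (Hn n) (H `&` Hn n) v by rewrite setIC; apply: R_has_index.
have h2 : has_index (Hn n) (Hn n `&` Hn n.+1) a.
  by have := has_index_conj (g ^+ n) (L_has_index ha); rewrite conjsetI conjsetM -expgSr.
have k2 : has_index (Hn n.+1) (Hn n `&` Hn n.+1) b.
  have := has_index_conj (g ^+ n) (R_has_index sH hb).
  by rewrite conjsetI conjsetM -expgSr setIC.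
have h3 : has_index (Hn n.+1) (Hn n.+1 `&` H) v' by apply: R_has_index.
have k3 : has_index H (Hn n.+1 `&` H) u' by rewrite setIC; apply: L_has_index.
have coc := has_index_cocycle sH (sHn n) (sHn n.+1) (L_has_index hu) k1 h2 k2 h3 k3.
have v_gt0 : (0 < v)%N by apply: has_index_gt0 (subgroup1 (sHn n)) k1.
apply/eqP; rewrite -(eqn_pmul2l v_gt0); apply/eqP.
transitivity ((v * b * u') * b ^ n)%N; first by rewrite expnS; ring.
rewrite -coc; transitivity (a * v' * (u * b ^ n))%N; first by ring.
by rewrite (IH u v hu hv) expnS; ring.
Qed.

End HeckeIndex.

Section DoubleCosets.
Variables (G : groupType) (H : set G).
Hypothesis sH : is_subgroup H.
Local Open Scope group_scope.

Definition dcoset x : set G := [set z | exists a b, [/\ H a, H b & z = a * x * b]].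

Lemma coset_repP x : H (coset_rep H x * x^-1).
Proof.
apply: (epsilon_spec (inhabits 1) (fun y => H (y * x^-1))).
by exists x; rewrite mulgV; apply: subgroup1.
Qed.

Lemma eq_coset_rep x y : H (x * y^-1) -> coset_rep H x = coset_rep H y.
Proof.
move=> hxy; rewrite /coset_rep; congr (epsilon _ _); apply: funext => z.
rewrite propeqE; split => hz.
- by have := subgroupM sH hz hxy; group_simpl.
- by have := subgroupM sH hz (subgroupV sH hxy); group_simpl.
Qed.

Lemma dcosetMl x h z : H h -> dcoset x (h * z) = dcoset x z.
Proof.
move=> hh; rewrite propeqE; split => -[a [b [ha hb e]]].
- exists (h^-1 * a), b; split => //; first by apply: subgroupM (subgroupV sH hh) ha.
  by rewrite -(mulKg h z) e !mulgA.
- by exists (h * a), b; split => //; [apply: subgroupM | rewrite e !mulgA].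
Qed.

Lemma dcosetMr x h z : H h -> dcoset x (z * h) = dcoset x z.
Proof.
move=> hh; rewrite propeqE; split => -[a [b [ha hb e]]].
- exists a, (b * h^-1); split => //; first by apply: subgroupM hb (subgroupV sH hh).
  by rewrite -(mulgK h z) e !mulgA.
- by exists a, (b * h); split => //; [apply: subgroupM | rewrite e !mulgA].
Qed.

Lemma dcosetV x z : dcoset x z -> dcoset x^-1 z^-1.
Proof.
by case=> a [b [ha hb ->]]; exists b^-1, a^-1; split; try exact: subgroupV; group_simpl.
Qed.

Lemma dcoset_coset_rep x z : dcoset x (coset_rep H z) = dcoset x z.
Proof.
have -> : coset_rep H z = (coset_rep H z * z^-1) * z by group_simpl.
by rewrite dcosetMl //; apply: coset_repP.
Qed.

Definition rtransversal x (y : nat -> G) m : Prop :=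
  [/\ forall i, (i < m)%N -> dcoset x (y i),
      forall z, dcoset x z -> exists2 i, (i < m)%N & H (z * (y i)^-1) &
      forall i j, (i < m)%N -> (j < m)%N -> H (y i * (y j)^-1) -> i = j].

(* The right cosets of H in HxH are those of the elements x h^-1, h ranging
   over representatives of H / (H ∩ x^-1 H x). *)
Lemma R_is_rtransversal x m : R_is H x m -> exists y, rtransversal x y m.
Proof.
move=> /index_is_has_index [f [[fH fd] fc]].
exists (fun i => x * (f i)^-1); split.
- move=> i hi; exists 1, (f i)^-1; split; last by group_simpl.
  + exact: subgroup1.
  + exact: subgroupV sH (fH _ hi).
- move=> z [a [b [ha hb ->]]].
  have [i hi [_ hK]] := fc _ (subgroupV sH hb).
  exists i => //; group_simpl; apply: subgroupM sH ha _.
  by move: hK; rewrite invgK; group_simpl => /(subgroupV sH); group_simpl.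
- move=> i j hi hj hK; apply: fd => //; split.
  + exact: subgroupM sH (subgroupV sH (fH _ hi)) (fH _ hj).
  + by rewrite invgK; move: hK; group_simpl.
Qed.

Section Transversal.
Variables (x : G) (y : nat -> G) (m : nat).
Hypothesis yT : rtransversal x y m.

Definition rtransversal_reps : seq G := mkseq (fun i => coset_rep H (y i)) m.

Lemma rtransversal_reps_uniq : uniq rtransversal_reps.
Proof.
case: yT => _ _ yd.
rewrite map_inj_in_uniq ?iota_uniq // => i j; rewrite !mem_iota !add0n => hi hj e.
apply: yd => //; have h1 := coset_repP (y i); have h2 := coset_repP (y j).
by rewrite e in h1; have := subgroupM sH (subgroupV sH h1) h2; group_simpl.
Qed.

Lemma mem_rtransversal_reps r : r \in rtransversal_reps -> reps H r /\ dcoset x r.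
Proof.
case/mapP => i; case: yT => yS _ _.
rewrite mem_iota add0n => hi ->.
by split; [exists (y i) | rewrite dcoset_coset_rep; apply: yS].
Qed.

Lemma rtransversal_repsP r : reps H r -> dcoset x r -> r \in rtransversal_reps.
Proof.
case: yT => _ yc _ [w ->]; rewrite dcoset_coset_rep => /yc [i hi hH].
by apply/mapP; exists i; [rewrite mem_iota | apply: eq_coset_rep].
Qed.

Lemma fsbig_reps_dcoset (V : nmodType) (phi : G -> V) :
  (forall z, reps H z -> ~ dcoset x z -> phi z = 0%R) ->
  (\sum_(z \in reps H) phi z = \sum_(r <- rtransversal_reps) phi r)%R.
Proof.
move=> phi0; rewrite (fsbig_seq _ _ rtransversal_reps_uniq); symmetry.
apply: fsbig_widen => [r /mem_rtransversal_reps [] //|z [hr hn] /=].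
by apply: phi0 => // hd; apply/hn/rtransversal_repsP.
Qed.

Local Open Scope ring_scope.

Lemma esum_reps_dcoset (R : realType) (psi : G -> \bar R) :
  (forall z, 0 <= psi z)%E ->
  (forall z, reps H z -> ~ dcoset x z -> psi z = 0%E) ->
  (\esum_(z in reps H) psi z = \sum_(r <- rtransversal_reps) psi r)%E.
Proof.
move=> psi_ge0 psi0.
have -> : (\esum_(z in reps H) psi z =
    \esum_(z in reps H) if z \in [set` rtransversal_reps] then psi z else 0)%E.
  apply: eq_esum => z hr; case: ifPn => // /negP; rewrite inE => hn.
  by apply: psi0 => // hd; apply/hn/rtransversal_repsP.
rewrite -esum_mkcondr.
have -> : reps H `&` [set` rtransversal_reps] = [set` rtransversal_reps].
  by apply/seteqP; split=> [z []//|z hz]; split=> //; case: (mem_rtransversal_reps hz).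
rewrite esum_fset => [||i _]; [|exact: finite_seq|exact: psi_ge0].
by rewrite -fsbig_seq // rtransversal_reps_uniq.
Qed.

End Transversal.
End DoubleCosets.

Import Order.TTheory GRing.Theory Num.Theory.
Local Open Scope ring_scope.

Lemma sumr_const_seq (V : nmodType) (T : Type) (s : seq T) (x : V) :
  \sum_(r <- s) x = x *+ size s.
Proof. by rewrite big_const_seq count_predT iter_addr_0. Qed.

Lemma eq_indic_at (R : pzRingType) (T : Type) (A B : set T) x y :
  A x = B y -> (\1_A x : R) = \1_B y.
Proof.
move=> e; rewrite !indicE (_ : x \in A = (y \in B)) //.
by apply/idP/idP; rewrite !in_setE e.
Qed.

Section AbsSquare.
Variable R : realType.

Lemma cabs2_ge0 (z : R[i]) : 0 <= cabs2 z.
Proof. by rewrite addr_ge0 ?sqr_ge0. Qed.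

Lemma cabs2_nat n : cabs2 (n%:R : R[i]) = n%:R ^+ 2.
Proof.
have -> : (n%:R : R[i]) = (n%:R)%:C%C by rewrite rmorph_nat.
by rewrite /cabs2 /= expr0n /= addr0.
Qed.

Lemma cabs2_indic (T : Type) (A : set T) z : cabs2 (\1_A z : R[i]) = \1_A z.
Proof. by rewrite !indicE cabs2_nat; case: (z \in A); rewrite ?expr0n ?expr1n. Qed.

End AbsSquare.

Section LengthFunction.
Variables (R : realType) (G : groupType) (H : set G) (l : G -> R).
Hypothesis hl : length_fn H l.

Lemma length_ge0 z : 0 <= l z.
Proof. by case: hl. Qed.

Lemma length_dcoset_le x z : dcoset H x z -> l z <= l x.
Proof.
case: hl => _ _ _ lM lH [a [b [ha hb ->]]].
apply: le_trans (lM _ _) _; rewrite (lH _ hb) addr0.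
by apply: le_trans (lM _ _) _; rewrite (lH _ ha) add0r.
Qed.

Lemma length_expg_le g n : l (g ^+ n)%g <= n%:R * l g.
Proof.
case: hl => _ l1 _ lM _; elim: n => [|n IH]; first by rewrite expg0 l1 mul0r.
by rewrite expgS mulrS mulrDl mul1r; apply: le_trans (lM _ _) _; rewrite lerD2l.
Qed.

Lemma powR_length_expg_le s g n k : 2 * s <= k%:R ->
  (1 + l (g ^+ n)%g) `^ (2 * s) <= ((n + 1) ^ k)%:R * (1 + l g) ^+ k.
Proof.
move=> sk; have lg_ge0 : 0 <= 1 + l g by rewrite addr_ge0 ?length_ge0.
have base_ge1 : 1 <= 1 + l (g ^+ n)%g by rewrite lerDl length_ge0.
apply: le_trans (ler_powR base_ge1 sk) _.
rewrite powR_mulrn ?(le_trans ler01) // natrX -exprMn.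
apply: lerXn2r; rewrite ?nnegrE ?mulr_ge0 ?addr_ge0 ?length_ge0 //.
apply: le_trans (_ : _ <= 1 + n%:R * l g) _; first by rewrite lerD2l length_expg_le.
have := length_ge0 g; have : 0 <= n%:R :> R by []; rewrite natrD; nra.
Qed.

End LengthFunction.

Section IndicatorOfDoubleCoset.
Variables (R : realType) (G : groupType) (H : set G).
Hypothesis sH : is_subgroup H.

Local Notation indic_dcoset x := (\1_(dcoset H x) : G -> R[i]).

Lemma hecke_elt_indic_dcoset x m : R_is H x m -> hecke_elt H (indic_dcoset x).
Proof.
case/(R_is_rtransversal sH) => y yT; split.
- by move=> h z hh; apply/eq_indic_at/dcosetMl.
- by move=> h z hh; apply/eq_indic_at/dcosetMr.
- apply: sub_finite_set (finite_seq (rtransversal_reps H y m)) => z [hr hz] /=.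
  apply: (rtransversal_repsP sH yT hr); apply: contrapT => z_out.
  by move: hz; rewrite indicE memNset ?eqxx.
Qed.

Lemma l2norm2_indic_dcoset x m : R_is H x m -> l2norm2 H (indic_dcoset x) = (m%:R)%:E.
Proof.
case/(R_is_rtransversal sH) => y yT.
rewrite /l2norm2 (esum_reps_dcoset sH yT) => [|z|z _ z_out].
- rewrite sumEFin (eq_big_seq (fun=> 1)) ?sumr_const_seq ?size_mkseq //.
  by move=> r /(mem_rtransversal_reps sH yT) [_ hr]; rewrite cabs2_indic indicE mem_set.
- by rewrite lee_fin cabs2_ge0.
- by rewrite cabs2_indic indicE memNset.
Qed.

Lemma conv_indic_dcoset x m : L_is H x m ->
  conv H (indic_dcoset x) (indic_dcoset x^-1) (coset_rep H 1) = m%:R.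
Proof.
move=> hm; have /(R_is_rtransversal sH) [y yT] : R_is H x^-1 m by rewrite /R_is invgK.
have r1 : H (coset_rep H 1) by have := coset_repP sH 1; rewrite invg1 mulg1.
rewrite /conv (fsbig_reps_dcoset sH yT) => [|z _ z_out]; last first.
  by rewrite [\1_ _ z]indicE memNset // mulr0.
rewrite (eq_big_seq (fun=> 1)) ?sumr_const_seq ?size_mkseq //.
move=> r /(mem_rtransversal_reps sH yT) [_ hr].
rewrite [\1_ _ r]indicE mem_set // mulr1 indicE mem_set // dcosetMl //.
by have := dcosetV sH hr; rewrite invgK.
Qed.

Lemma weighted_norm2_indic_dcoset_le l s x m : length_fn H l -> 0 <= s -> R_is H x m ->
  weighted_norm2 H l s (indic_dcoset x) <= m%:R * (1 + l x) `^ (2 * s).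
Proof.
move=> hl s_ge0 /(R_is_rtransversal sH) [y yT].
rewrite /weighted_norm2 (fsbig_reps_dcoset sH yT) => [|z _ z_out]; last first.
  by rewrite cabs2_indic indicE memNset // mul0r.
apply: le_trans (_ : _ <= \sum_(r <- rtransversal_reps H y m) (1 + l x) `^ (2 * s)) _.
  rewrite big_seq [leRHS]big_seq; apply: ler_sum => r /(mem_rtransversal_reps sH yT) [_ hr].
  rewrite cabs2_indic indicE mem_set // mul1r.
  apply: ge0_ler_powR; rewrite ?nnegrE ?addr_ge0 ?mulr_ge0 ?(length_ge0 hl) //.
  by rewrite lerD2l (length_dcoset_le hl).
by rewrite sumr_const_seq size_mkseq [leRHS]mulr_natl.
Qed.

End IndicatorOfDoubleCoset.

Lemma leq_bernoulli b j : (0 < b)%N -> ((b + j) * b ^ j <= b * (b + 1) ^ j)%N.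
Proof.
move=> b_gt0; elim: j => [|j IH]; first by rewrite !expn0 addn0.
rewrite !expnS; apply: leq_trans (_ : _ <= (b + 1) * ((b + j) * b ^ j))%N _.
  by rewrite mulnA (mulnA (b + 1)) leq_mul2r; apply/orP; right; nia.
by rewrite [leqRHS]mulnCA leq_mul2l IH orbT.
Qed.

Lemma leq_exp2rW m n e : (m <= n)%N -> (m ^ e <= n ^ e)%N.
Proof. by move=> mn; elim: e => [|e IH]; rewrite ?expn0 // !expnS leq_mul. Qed.

(* With t := k.+1 (M Q^k + 1) and Q := b k.+1 + 1, the exponent n := b t works:
   a^n >= (b + 1)^(b t) >= 2^t b^n by Bernoulli, and 2^t beats M (n + 1)^k. *)
Lemma expn_dominates_poly a b M k : (b < a)%N -> (0 < b)%N ->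
  exists n, (M * b ^ n * (n + 1) ^ k < a ^ n)%N.
Proof.
move=> ba b_gt0.
pose Q := (b * k.+1 + 1)%N; pose J := (M * Q ^ k + 1)%N; pose t := (k.+1 * J)%N.
exists (b * t)%N.
have two_pow : (2 * b ^ b <= (b + 1) ^ b)%N.
  by have := leq_bernoulli b b_gt0; rewrite addnn -mul2n -mulnA mulnCA leq_pmul2l.
have pow_a_ge : (2 ^ t * b ^ (b * t) <= a ^ (b * t))%N.
  apply: leq_trans (_ : _ <= (b + 1) ^ (b * t))%N _.
    by rewrite (expnM b b t) (expnM (b + 1) b t) -expnMn; apply: leq_exp2rW.
  by apply: leq_exp2rW; rewrite addn1.
apply: leq_trans pow_a_ge; rewrite mulnAC ltn_pmul2r ?expn_gt0 ?b_gt0 //.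
have succ_n_le : (b * t + 1 <= Q * J)%N by rewrite /t /Q mulnA mulnDl mul1n leq_add2l /J addn1.
apply: leq_ltn_trans (_ : _ <= M * (Q * J) ^ k)%N _; first by rewrite leq_mul ?leq_exp2rW.
have pow_J_lt : (J ^ k.+1 < 2 ^ t)%N by rewrite /t mulnC expnM ltn_exp2r //; apply: ltn_expl.
apply: leq_ltn_trans pow_J_lt; rewrite expnMn expnS mulnA leq_mul2r; apply/orP; right.
by rewrite /J addn1.
Qed.

Section PropertyRD.
Variables (R : realType) (G : groupType) (H : set G) (l : G -> R) (s c : R).
Hypotheses (hH : hecke_pair H) (hl : length_fn H l) (s_gt0 : 0 < s).
Hypothesis hrd : forall f, hecke_elt H f ->
  lambda_norm_le H f (c * Num.sqrt (weighted_norm2 H l s f)).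

Let sH : is_subgroup H := hH.1.

(* Test (RD) with the indicators f of HxH and xi of Hx^-1H: (f * xi)(H) = L(x)
   and ||xi||^2 = L(x), while the weighted norm of f is at most
   R(x) (1 + l x)^(2 s). *)
Lemma RD_index_bound x m m' : R_is H x m -> L_is H x m' ->
  (m'%:R : R) <= c ^+ 2 * m%:R * (1 + l x) `^ (2 * s).
Proof.
move=> hm hm'; have hm'V : R_is H x^-1 m' by rewrite /R_is invgK.
set f := \1_(dcoset H x) : G -> R[i]; set xi := \1_(dcoset H x^-1) : G -> R[i].
set W := weighted_norm2 H l s f.
have [xi_inv _ _] := hecke_elt_indic_dcoset R sH hm'V.
have norm_xi : l2norm2 H xi = (m'%:R)%:E := l2norm2_indic_dcoset R sH hm'V.
have conv_ge : ((m'%:R ^+ 2)%:E <= l2norm2 H (conv H f xi))%E.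
  rewrite /l2norm2; apply: esum_ge; exists [set coset_rep H 1].
    by split; [exact: finite_set1 | move=> z -> ; exists 1%g].
  by rewrite fsbig_set1 (conv_indic_dcoset R sH hm') cabs2_nat.
have W_ge0 : 0 <= W by apply: fsumr_ge0 => z _; rewrite mulr_ge0 ?cabs2_ge0 ?powR_ge0.
have xi_l2 : in_l2 H xi by split; rewrite // norm_xi ltry.
have := le_trans conv_ge (hrd (hecke_elt_indic_dcoset R sH hm) xi_l2).
rewrite norm_xi -EFinM lee_fin exprMn sqr_sqrtr // => ineq.
have W_le := weighted_norm2_indic_dcoset_le sH hl (ltW s_gt0) hm.
have m'_le : m'%:R <= c ^+ 2 * W.
  case: (posnP m') => [->|m'_gt0]; first by rewrite mulr_ge0 ?sqr_ge0.
  by move: ineq; rewrite expr2 ler_pM2r ?ltr0n.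
by apply: le_trans m'_le _; rewrite -mulrA ler_wpM2l ?sqr_ge0.
Qed.

Lemma RD_index_expg_bound g a b : L_is H g a -> R_is H g b ->
  exists M k, forall n, (a ^ n <= M * b ^ n * (n + 1) ^ k)%N.
Proof.
move=> ha hb.
pose k := Num.Def.archi_bound (2 * s).
have hk : 2 * s <= k%:R by apply/ltW/archi_boundP; rewrite mulr_ge0 // ltW.
pose K := c ^+ 2 * (1 + l g) ^+ k.
have K_ge0 : 0 <= K by rewrite mulr_ge0 ?sqr_ge0 // exprn_ge0 // addr_ge0 ?(length_ge0 hl).
pose M := Num.Def.archi_bound K.
have KM : K <= M%:R by apply/ltW/archi_boundP.
exists M, k => n.
have [u hu] := hH.2 (g ^+ n)%g; have [v hv] := hH.2 (g ^+ n)^-1%g.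
have v_gt0 : (0 < v)%N by apply: has_index_gt0 (subgroup1 sH) (L_has_index hv).
rewrite -(leq_pmul2l v_gt0) -(L_R_expg hH ha hb hu hv) -(ler_nat R) !natrM.
set B : R := (b ^ n)%:R; set N : R := ((n + 1) ^ k)%:R.
apply: le_trans (ler_wpM2r (ler0n _ _) (RD_index_bound hv hu)) _.
apply: le_trans (_ : _ <= c ^+ 2 * v%:R * (N * (1 + l g) ^+ k) * B) _.
  apply: ler_wpM2r => //; apply: ler_wpM2l; first by rewrite mulr_ge0 ?sqr_ge0.
  exact: powR_length_expg_le hl _ _ _ _ hk.
have -> : c ^+ 2 * v%:R * (N * (1 + l g) ^+ k) * B = v%:R * (K * (B * N)).
  by rewrite /K; ring.
have -> : v%:R * (M%:R * B * N) = v%:R * (M%:R * (B * N)) by ring.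
by rewrite ler_wpM2l // ler_wpM2r ?mulr_ge0.
Qed.

Lemma RD_L_le_R g a b : L_is H g a -> R_is H g b -> (a <= b)%N.
Proof.
move=> ha hb; rewrite leqNgt; apply/negP => ba.
have b_gt0 : (0 < b)%N by apply: has_index_gt0 (subgroup1 sH) (L_has_index hb).
have [M [k bound]] := RD_index_expg_bound ha hb.
have [n] := expn_dominates_poly M k ba b_gt0.
by rewrite ltnNge bound.
Qed.

End PropertyRD.

Theorem corollary3p13 (G : groupType) (H : set G) (R : realType) :
  hecke_pair H -> property_RD R H -> rel_unimodular H.
Proof.
move=> hH [l [hl [s [c [s_gt0 _ hrd]]]]] g n m hn hm.
apply/eqP; rewrite eqn_leq (RD_L_le_R hH hl s_gt0 hrd hn hm) /=.
by apply: (RD_L_le_R hH hl s_gt0 hrd (g := g^-1%g)); rewrite // /R_is invgK.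
Qed.
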